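(* Let $\Lambda\in\{\Lambda_G,\Lambda_U\}$ and assume there exist constants $c_{\mathrm{Fro}},C_{\mathrm{Fro}}>0$ such that $c_{\mathrm{Fro}}\|\mathbf{M}\|_{\mathrm{Fro}}\le\|\mathbf{M}\|_\Lambda\le C_{\mathrm{Fro}}\|\mathbf{M}\|_{\mathrm{Fro}}$ for all $\mathbf{M}\in S_d(\mathbb{R})$. Consider $E=(S_d(\mathbb{R}),\|\cdot\|_{\mathrm{Fro}})$, $F=(S_d(\mathbb{R}),\|\cdot\|_\Lambda)$, $\Omega$ the set of invertible symmetric matrices, $f=\operatorname{inv}:\boldsymbol\Theta\mapsto\boldsymbol\Theta^{-1}$, and $\mathfrak{X}=\mathfrak{S}^{-1}_{k,a,b}=\{\boldsymbol\Theta\in S_d^{++}(\mathbb{R}):\ \|\boldsymbol\Theta\|_0\le d+2k,\ \operatorname{spec}(\boldsymbol\Theta)\subseteq[a,b]\}$ with $0<a\le b$. Then on $\mathfrak{X}$, $f$ is $(\alpha,\beta)$-bi-Lipschitz, i.e. $\alpha\|\boldsymbol\Theta_1-\boldsymbol\Theta_2\|_{\mathrm{Fro}}\le\|\boldsymbol\Theta_1^{-1}-\boldsymbol\Theta_2^{-1}\|_\Lambda\le\beta\|\boldsymbol\Theta_1-\boldsymbol\Theta_2\|_{\mathrm{Fro}}$ for all $\boldsymbol\Theta_1,\boldsymbol\Theta_2\in\mathfrak{X}$; it satisfies $\|f(\boldsymbol\Theta_1)-f(\boldsymbol\Theta_2)-\mathrm{D}f_{\boldsymbol\Theta_2}(\boldsymbol\Theta_1-\boldsymbol\Theta_2)\|_\Lambda\le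 L\|\boldsymbol\Theta_1-\boldsymbol\Theta_2\|_{\mathrm{Fro}}^2$ and $\|\mathrm{D}f_{\boldsymbol\Theta_1}-\mathrm{D}f_{\boldsymbol\Theta_2}\|_{\mathrm{op}}\le\zeta\|\boldsymbol\Theta_1-\boldsymbol\Theta_2\|_{\mathrm{Fro}}$ for all $\boldsymbol\Theta_1,\boldsymbol\Theta_2\in\mathfrak{X}$; with $$\alpha=\frac{c_{\mathrm{Fro}}}{b^2},\quad\beta=\frac{C_{\mathrm{Fro}}}{a^2},\quad L=\frac{C_{\mathrm{Fro}}}{a^3},\quad\zeta=2L.$$
   Context: $S_d(\mathbb{R})$: real symmetric $d\times d$ matrices; $S_d^{++}(\mathbb{R})$: symmetric positive definite ones; $\|\mathbf{M}\|_0$: number of nonzero entries; $\operatorname{spec}$: spectrum. $\Lambda_G=\mathcal{N}(0,\frac1d\mathbf{I}_d)$, $\Lambda_U$ the uniform distribution on $\mathbb{S}^{d-1}$, and $\|\mathbf{M}\|_\Lambda=\mathbb{E}_{\mathbf{a}\sim\Lambda}[|\mathbf{a}^\top\mathbf{M}\mathbf{a}|]$. $\mathrm{D}f_{\boldsymbol\Theta}$ is the differential of the matrix inverse at $\boldsymbol\Theta$, i.e. $\mathbf{H}\mapsto-\boldsymbol\Theta^{-1}\mathbf{H}\boldsymbol\Theta^{-1}$, and $\|T\|_{\mathrm{op}}=\sup_{\|\mathbf{H}\|_{\mathrm{Fro}}\le1}\|T(\mathbf{H})\|_\Lambda$. *)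

From HB Require Import structures.
From mathcomp Require Import all_boot all_order all_algebra.
From mathcomp Require Import all_classical all_reals all_analysis.
Set Implicit Arguments. Unset Strict Implicit. Unset Printing Implicit Defensive.
Import Order.TTheory GRing.Theory Num.Theory.
Local Open Scope ring_scope.
Local Open Scope classical_set_scope.

Section defs.
Context {R : realType}.

Definition symmx (d : nat) (M : 'M[R]_d) : Prop := M^T = M.

Definition fro (d : nat) (M : 'M[R]_d) : R :=
  Num.sqrt (\sum_(i < d) \sum_(j < d) M i j ^+ 2).

Definition nnz (d : nat) (M : 'M[R]_d) : nat :=
  #|[set ij : 'I_d * 'I_d | M ij.1 ij.2 != 0]|.

Definition quadform (d : nat) (M : 'M[R]_d) (a : 'I_d -> R) : R :=
  \sum_(i < d) \sum_(j < d) a i * M i j * a j.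

Definition spd (d : nat) (M : 'M[R]_d) : Prop :=
  symmx M /\ forall v : 'cV[R]_d, v != 0 -> 0 < (v^T *m M *m v) 0 0.

Definition spec_in (d : nat) (M : 'M[R]_d) (a b : R) : Prop :=
  forall l : R, eigenvalue M l -> a <= l <= b.

Definition frakS (d k : nat) (a b : R) (M : 'M[R]_d) : Prop :=
  spd M /\ (nnz M <= d + 2 * k)%N /\ spec_in M a b.

Definition Dinv (d : nat) (Th H : 'M[R]_d) : 'M[R]_d :=
  - (invmx Th *m H *m invmx Th).

Context {dT : measure_display} {T : measurableType dT} (P : probability T R).

(* Lambda_G: the vector (X_0,...,X_{d-1}) has i.i.d. N(0, 1/d) coordinates
   (normal_prob m s has standard deviation s). *)
Definition isLambdaG (d : nat) (X : 'I_d -> {RV P >-> R}) : Prop :=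
  (forall i (B : set R), measurable B ->
      P (X i @^-1` B) = normal_prob 0 (Num.sqrt (d%:R^-1)) B) /\
  (forall B : 'I_d -> set R, (forall i, measurable (B i)) ->
      P (\bigcap_(i in [set: 'I_d]) (X i @^-1` B i)) =
      (\prod_(i < d) P (X i @^-1` B i))%E).

(* Lambda_U: uniform on the sphere, realised as a normalised Gaussian vector *)
Definition isLambdaU (d : nat) (Y : 'I_d -> {RV P >-> R}) : Prop :=
  exists X : 'I_d -> {RV P >-> R}, isLambdaG X /\
    forall t i, Y i t = X i t / Num.sqrt (\sum_(j < d) X j t ^+ 2).

(* ||M||_Lambda = E_{a ~ Lambda} |a^T M a|, where a = (Y_i)_i has law Lambda *)
Definition normL (d : nat) (Y : 'I_d -> {RV P >-> R}) (M : 'M[R]_d) : \bar R :=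
  (\int[P]_t `| quadform M (fun i => Y i t) |%:E)%E.

Definition opnormL (d : nat) (Y : 'I_d -> {RV P >-> R})
    (Tm : 'M[R]_d -> 'M[R]_d) : \bar R :=
  ereal_sup [set normL Y (Tm H) | H in [set H : 'M[R]_d | symmx H /\ fro H <= 1]].

End defs.

From HB Require Import structures.
From mathcomp Require Import all_boot all_order all_algebra.
From mathcomp Require Import all_classical all_reals all_analysis.
From mathcomp Require Import ring lra.
Import Order.TTheory GRing.Theory Num.Theory.
Local Open Scope ring_scope.
Local Open Scope classical_set_scope.
Set Implicit Arguments. Unset Strict Implicit. Unset Printing Implicit Defensive.

(* Put H := Th1 - Th2 and I_k := Th_k^-1.  Everything rests on exact identities:
   I_1 - I_2 = - I_1 H I_2, the Taylor remainder equals I_1 H I_2 H I_2, and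
   (Df_Th1 - Df_Th2) X = I_1 H I_2 X I_2 + I_1 X I_1 H I_2.  A symmetric matrix with
   spectrum in [a, b] scales the length of every vector by a factor in [a, b], so I_k
   scales by a factor in [1/b, 1/a] and the Frobenius norm of each product above is
   controlled by powers of 1/a (or 1/b); the equivalence of ||.||_Lambda with the
   Frobenius norm then transfers the bounds.
   The scaling bounds avoid diagonalisation: the infimum mu of the Rayleigh quotient
   of M is an eigenvalue, because M - mu is positive semidefinite with Rayleigh
   quotients arbitrarily close to 0, which is impossible for an invertible
   positive semidefinite matrix. *)

Lemma eigenvalueN (F : fieldType) n (A : 'M[F]_n) l :
  eigenvalue (- A) l -> eigenvalue A (- l).
Proof.
move=> /eigenvalueP [v vA v0]; apply/eigenvalueP; exists v => //.
by move: vA; rewrite mulmxN scaleNr => /eqP; rewrite eqr_oppLR => /eqP.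
Qed.

Section QuadraticForms.
Variable R : realFieldType.
Implicit Types (n : nat) (t : R).

Definition sqnorm n (v : 'rV[R]_n) : R := \sum_i v 0 i ^+ 2.
Definition bform n (M : 'M[R]_n) (u v : 'rV[R]_n) : R := (u *m M *m v^T) 0 0.
Definition l1mx n (M : 'M[R]_n) : R := \sum_j \sum_i `|M i j|.

Lemma l1mx_ge0 n (M : 'M[R]_n) : 0 <= l1mx M.
Proof. by do 2!(apply: sumr_ge0 => ? _). Qed.

Lemma sqnorm_ge0 n (v : 'rV[R]_n) : 0 <= sqnorm v.
Proof. by apply: sumr_ge0 => i _; exact: sqr_ge0. Qed.

Lemma sqnorm0 n : sqnorm (0 : 'rV[R]_n) = 0.
Proof. by rewrite /sqnorm big1 // => i _; rewrite mxE expr0n. Qed.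

Lemma sqnorm_gt0 n (v : 'rV[R]_n) : v != 0 -> 0 < sqnorm v.
Proof.
move=> v0; rewrite lt_def sqnorm_ge0 andbT; apply: contra v0.
rewrite /sqnorm => /eqP /psumr_eq0P v0; apply/eqP/rowP => i; rewrite mxE.
by apply/eqP; rewrite -sqrf_eq0; apply/eqP/v0 => // j _; exact: sqr_ge0.
Qed.

Lemma sqr_coord_le_sqnorm n (v : 'rV[R]_n) i : v 0 i ^+ 2 <= sqnorm v.
Proof.
by rewrite /sqnorm (bigD1 i) //= lerDl; apply: sumr_ge0 => j _; exact: sqr_ge0.
Qed.

Lemma bformE n (M : 'M[R]_n) u v :
  bform M u v = \sum_j \sum_i u 0 i * M i j * v 0 j.
Proof.
rewrite /bform mxE; apply: eq_bigr => j _; rewrite mxE big_distrl /=.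
by apply: eq_bigr => i _; rewrite !mxE.
Qed.

Lemma bform1E n (u v : 'rV[R]_n) : bform 1%:M u v = \sum_i u 0 i * v 0 i.
Proof. by rewrite /bform mulmx1 mxE; apply: eq_bigr => i _; rewrite mxE. Qed.

Lemma sqnormE n (v : 'rV[R]_n) : sqnorm v = bform 1%:M v v.
Proof. by rewrite bform1E; apply: eq_bigr => i _; rewrite expr2. Qed.

Lemma sqnorm_mulmx n (M : 'M[R]_n) v : sqnorm (v *m M) = bform M v (v *m M).
Proof. by rewrite sqnormE /bform mulmx1. Qed.

Lemma bform0 n (M : 'M[R]_n) : bform M 0 0 = 0.
Proof. by rewrite /bform !mul0mx mxE. Qed.

Lemma bformN n (M : 'M[R]_n) u v : bform (- M) u v = - bform M u v.
Proof. by rewrite /bform mulmxN mulNmx mxE. Qed.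

Lemma bformB n (M N : 'M[R]_n) u v : bform (M - N) u v = bform M u v - bform N u v.
Proof. by rewrite /bform mulmxBr mulmxBl -!trace_mx11 linearB. Qed.

Lemma bform_scalar n t (u v : 'rV[R]_n) : bform t%:M u v = t * bform 1%:M u v.
Proof.
by rewrite /bform -[t%:M]scalemx1 -scalemxAr -scalemxAl -!trace_mx11 linearZ.
Qed.

Lemma bform_subr_scalar n (M : 'M[R]_n) mu w :
  bform (M - mu%:M) w w = bform M w w - mu * sqnorm w.
Proof. by rewrite bformB bform_scalar -sqnormE. Qed.

Lemma bform_sym n (M : 'M[R]_n) u v : M^T = M -> bform M u v = bform M v u.
Proof.
by move=> sM; rewrite /bform -!trace_mx11 -mxtrace_tr !trmx_mul trmxK sM mulmxA.
Qed.

Lemma bform_dotE n (M : 'M[R]_n) u v : M^T = M -> bform M u v = bform 1%:M u (v *m M).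
Proof. by move=> sM; rewrite /bform mulmx1 trmx_mul sM mulmxA. Qed.

Lemma bform_le_l1mx n (M : 'M[R]_n) w : `|bform M w w| <= l1mx M * sqnorm w.
Proof.
rewrite bformE /l1mx big_distrl /=; apply: (le_trans (ler_norm_sum _ _ _)).
apply: ler_sum => j _; rewrite big_distrl /=.
apply: (le_trans (ler_norm_sum _ _ _)); apply: ler_sum => i _.
rewrite !normrM -mulrA mulrCA ler_wpM2l //.
have := sqr_coord_le_sqnorm w i; have := sqr_coord_le_sqnorm w j.
rewrite -(real_normK (num_real (w 0 i))) -(real_normK (num_real (w 0 j))).
have := normr_ge0 (w 0 i); have := normr_ge0 (w 0 j).
set x := `|w 0 i|; set y := `|w 0 j|; nra.
Qed.

Lemma bform_expand n (M : 'M[R]_n) u v t : M^T = M ->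
  bform M (u + t *: v) (u + t *: v)
  = bform M u u + 2 * t * bform M u v + t ^+ 2 * bform M v v.
Proof.
move=> sM; rewrite /bform linearD linearZ /= !mulmxDl !mulmxDr.
rewrite -!scalemxAl -!scalemxAr -!trace_mx11 !linearD !linearZ /= !trace_mx11.
have := bform_sym u v sM; rewrite /bform => ->; ring.
Qed.

Lemma sqr_le_mul_of_quad_ge0 (A B C : R) :
  0 <= C -> (forall t, 0 <= A + 2 * t * B + t ^+ 2 * C) -> B ^+ 2 <= A * C.
Proof.
move=> C_ge0 q_ge0.
have [C0|C_neq0] := eqVneq C 0.
  rewrite C0 mulr0; have [->|B_neq0] := eqVneq B 0; first by rewrite expr0n.
  have := q_ge0 (- (A + 1) / (2 * B)); rewrite C0 mulr0 addr0.
  have -> : A + 2 * (- (A + 1) / (2 * B)) * B = -1 by field.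
  by rewrite ler0N1.
have C_gt0 : 0 < C by rewrite lt_def C_neq0.
have := q_ge0 (- B / C).
have -> : A + 2 * (- B / C) * B + (- B / C) ^+ 2 * C = A - B ^+ 2 / C by field.
by rewrite subr_ge0 ler_pdivrMr.
Qed.

Lemma bform_CS n (M : 'M[R]_n) u v : M^T = M -> (forall w, 0 <= bform M w w) ->
  bform M u v ^+ 2 <= bform M u u * bform M v v.
Proof.
move=> sM M_psd; apply: sqr_le_mul_of_quad_ge0 => // t.
by rewrite -bform_expand.
Qed.

Lemma bform1_CS n (u v : 'rV[R]_n) : bform 1%:M u v ^+ 2 <= sqnorm u * sqnorm v.
Proof.
rewrite !sqnormE; apply: bform_CS; first exact: trmx1.
by move=> w; rewrite -sqnormE sqnorm_ge0.
Qed.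
End QuadraticForms.

Section SquaredFrobenius.
Variable R : realFieldType.
Implicit Types (n : nat) (c : R).

Definition fro2 n (M : 'M[R]_n) : R := \sum_i \sum_j M i j ^+ 2.

Definition gain_le n (A : 'M[R]_n) c := forall u, sqnorm (u *m A) <= c * sqnorm u.
Definition gain_ge n (A : 'M[R]_n) c := forall u, c * sqnorm u <= sqnorm (u *m A).

Lemma fro2_rows n (M : 'M[R]_n) : fro2 M = \sum_i sqnorm (row i M).
Proof. by apply: eq_bigr => i _; apply: eq_bigr => j _; rewrite mxE. Qed.

Lemma fro2_ge0 n (M : 'M[R]_n) : 0 <= fro2 M.
Proof. by rewrite fro2_rows; apply: sumr_ge0 => i _; exact: sqnorm_ge0. Qed.

Lemma fro2_tr n (M : 'M[R]_n) : fro2 M^T = fro2 M.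
Proof.
rewrite /fro2 exchange_big /=; apply: eq_bigr => i _; apply: eq_bigr => j _.
by rewrite mxE.
Qed.

Lemma fro2N n (M : 'M[R]_n) : fro2 (- M) = fro2 M.
Proof. by apply: eq_bigr => i _; apply: eq_bigr => j _; rewrite mxE sqrrN. Qed.

Lemma fro2D_le n (X Y : 'M[R]_n) : fro2 (X + Y) <= 2 * (fro2 X + fro2 Y).
Proof.
rewrite /fro2 -big_split mulr_sumr /=; apply: ler_sum => i _.
rewrite -big_split mulr_sumr /=; apply: ler_sum => j _.
rewrite mxE; have := sqr_ge0 (X i j - Y i j); rewrite sqrrB sqrrD; lra.
Qed.

Lemma sqnorm_mulmx_le n (u : 'rV[R]_n) (A : 'M[R]_n) :
  sqnorm (u *m A) <= sqnorm u * fro2 A.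
Proof.
rewrite /fro2 exchange_big /= mulr_sumr; apply: ler_sum => k _.
have := bform1_CS u (\row_j A j k); rewrite bform1E.
have -> : sqnorm (\row_j A j k) = \sum_j A j k ^+ 2.
  by apply: eq_bigr => j _; rewrite mxE.
congr (_ <= _); rewrite [(u *m A) 0 k]mxE; congr (_ ^+ 2).
by apply: eq_bigr => j _; rewrite mxE.
Qed.

Lemma fro2_mulmx_le n (X Y : 'M[R]_n) : fro2 (X *m Y) <= fro2 X * fro2 Y.
Proof.
rewrite [fro2 (X *m Y)]fro2_rows [fro2 X]fro2_rows big_distrl /=.
by apply: ler_sum => i _; rewrite row_mul sqnorm_mulmx_le.
Qed.

Lemma fro2_mulmxr_le n (X A : 'M[R]_n) c : gain_le A c -> fro2 (X *m A) <= c * fro2 X.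
Proof.
move=> hA; rewrite !fro2_rows mulr_sumr; apply: ler_sum => i _.
by rewrite row_mul; exact: hA.
Qed.

Lemma fro2_mulmxr_ge n (X A : 'M[R]_n) c : gain_ge A c -> c * fro2 X <= fro2 (X *m A).
Proof.
move=> hA; rewrite !fro2_rows mulr_sumr; apply: ler_sum => i _.
by rewrite row_mul; exact: hA.
Qed.

Lemma fro2_mulmxl_le n (X A : 'M[R]_n) c : A^T = A -> gain_le A c ->
  fro2 (A *m X) <= c * fro2 X.
Proof.
move=> sA hA; rewrite -[fro2 (A *m X)]fro2_tr trmx_mul sA -(fro2_tr X).
exact: fro2_mulmxr_le.
Qed.

Lemma fro2_mulmxl_ge n (X A : 'M[R]_n) c : A^T = A -> gain_ge A c ->
  c * fro2 X <= fro2 (A *m X).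
Proof.
move=> sA hA; rewrite -[fro2 (A *m X)]fro2_tr trmx_mul sA -(fro2_tr X).
exact: fro2_mulmxr_ge.
Qed.

Lemma fro2_sandwich_le n (A B X : 'M[R]_n) cA cB : A^T = A -> 0 <= cB ->
  gain_le A cA -> gain_le B cB -> fro2 (A *m X *m B) <= cA * cB * fro2 X.
Proof.
move=> sA cB_ge0 hA hB; apply: le_trans (fro2_mulmxr_le _ hB) _.
rewrite [cA * cB]mulrC -mulrA; apply: (ler_wpM2l cB_ge0); exact: fro2_mulmxl_le.
Qed.

Lemma fro2_sandwich_ge n (A B X : 'M[R]_n) cA cB : A^T = A -> 0 <= cB ->
  gain_ge A cA -> gain_ge B cB -> cA * cB * fro2 X <= fro2 (A *m X *m B).
Proof.
move=> sA cB_ge0 hA hB; apply: le_trans _ (fro2_mulmxr_ge _ hB).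
rewrite [cA * cB]mulrC -mulrA; apply: (ler_wpM2l cB_ge0); exact: fro2_mulmxl_ge.
Qed.

Lemma fro2_sandwich2_le n (A B C X Y : 'M[R]_n) c : A^T = A -> 0 <= c ->
  gain_le A c -> gain_le B c -> gain_le C c ->
  fro2 (A *m X *m C *m Y *m B) <= c ^+ 3 * (fro2 X * fro2 Y).
Proof.
move=> sA c_ge0 hA hB hC.
have -> : A *m X *m C *m Y *m B = A *m (X *m C *m Y) *m B by rewrite !mulmxA.
apply: le_trans (fro2_sandwich_le _ sA c_ge0 hA hB) _.
have -> : c ^+ 3 * (fro2 X * fro2 Y) = c * c * (c * fro2 X * fro2 Y) by ring.
apply: ler_wpM2l; first exact: mulr_ge0.
apply: le_trans (fro2_mulmx_le _ _) _.
by apply: ler_wpM2r; [exact: fro2_ge0 | exact: fro2_mulmxr_le].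
Qed.

Lemma unitmx_psd_coercive n (N : 'M[R]_n) :
  N^T = N -> (forall w, 0 <= bform N w w) -> N \in unitmx ->
  forall w, sqnorm w <= fro2 (invmx N) * l1mx N * bform N w w.
Proof.
move=> sN N_psd N_unit w.
(* Cauchy-Schwarz for N: |w N|^4 = <w, w N>_N^2 <= <w, w>_N <w N, w N>_N. *)
have z_le : sqnorm (w *m N) <= l1mx N * bform N w w.
  have [z0|/sqnorm_gt0 z_gt0] := eqVneq (w *m N) 0.
    by rewrite z0 sqnorm0 mulr_ge0 ?l1mx_ge0.
  rewrite -(ler_pM2r z_gt0) -expr2 {1}sqnorm_mulmx.
  apply: le_trans (bform_CS _ _ sN N_psd) _.
  rewrite -mulrA mulrCA; apply: (ler_wpM2l (N_psd w)).
  exact: le_trans (ler_norm _) (bform_le_l1mx _ _).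
have w_le : sqnorm w <= sqnorm (w *m N) * fro2 (invmx N).
  by have := sqnorm_mulmx_le (w *m N) (invmx N); rewrite mulmxK.
apply: le_trans w_le _; rewrite mulrC -mulrA.
by apply: ler_wpM2l; [exact: fro2_ge0 | exact: z_le].
Qed.
End SquaredFrobenius.

Section RayleighQuotient.
Variable R : realType.
Implicit Types (n : nat).

Lemma exists_eigenvalue_le_bform n (M : 'M[R]_n) (v : 'rV[R]_n) :
  M^T = M -> v != 0 ->
  exists2 mu, eigenvalue M mu & forall w, mu * sqnorm w <= bform M w w.
Proof.
move=> sM v0; pose S := [set bform M w w / sqnorm w | w in [set w | w != 0]].
have S_lb : lbound S (- l1mx M).
  move=> _ [w /= w0 <-]; rewrite ler_pdivlMr ?sqnorm_gt0 // mulNr lerNl.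
  by apply: le_trans (ler_norm _) _; rewrite normrN bform_le_l1mx.
have S_inf : has_inf S.
  by split; [exists (bform M v v / sqnorm v); exists v | exists (- l1mx M)].
pose mu := inf S.
have mu_le w : mu * sqnorm w <= bform M w w.
  have [->|w0] := eqVneq w 0; first by rewrite sqnorm0 bform0 mulr0.
  by rewrite -ler_pdivlMr ?sqnorm_gt0 //; apply: ge_inf; [exists (- l1mx M) | exists w].
exists mu => //; set N := M - mu%:M.
have sN : N^T = N by rewrite /N linearB /= tr_scalar_mx sM.
have N_psd w : 0 <= bform N w w by rewrite bform_subr_scalar subr_ge0.
rewrite /eigenvalue /eigenspace kermx_eq0 row_free_unit -/N; apply/negP => N_unit.
set K := fro2 (invmx N) * l1mx N.
have K_ge0 : 0 <= K by rewrite mulr_ge0 ?fro2_ge0 ?l1mx_ge0.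
have e_gt0 : 0 < (K + 1)^-1 by rewrite invr_gt0; lra.
have [_ [w /= w0 <-] w_lt] := inf_adherent e_gt0 S_inf.
have small : bform N w w < (K + 1)^-1 * sqnorm w.
  by rewrite bform_subr_scalar ltrBlDr -mulrDl -ltr_pdivrMr ?sqnorm_gt0 // addrC.
have : sqnorm w < sqnorm w.
  apply: le_lt_trans (unitmx_psd_coercive sN N_psd N_unit w) _.
  apply: le_lt_trans (ler_wpM2l K_ge0 (ltW small)) _.
  by rewrite mulrA gtr_pMl ?sqnorm_gt0 // ltr_pdivrMr ?mul1r ?ltrDl //; lra.
by rewrite ltxx.
Qed.

Lemma bform_ge_of_eigenvalues_ge n (M : 'M[R]_n) c : M^T = M ->
  (forall l, eigenvalue M l -> c <= l) -> forall v, c * sqnorm v <= bform M v v.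
Proof.
move=> sM c_le v; have [->|v0] := eqVneq v 0; first by rewrite sqnorm0 bform0 mulr0.
have [mu /c_le c_mu mu_le] := exists_eigenvalue_le_bform sM v0.
exact: le_trans (ler_wpM2r (sqnorm_ge0 v) c_mu) (mu_le v).
Qed.
End RayleighQuotient.

Section SpectrumBounds.
Variables (R : realType) (n : nat) (Th : 'M[R]_n) (a b : R).
Hypotheses (sTh : symmx Th) (a_gt0 : 0 < a) (a_le_b : a <= b) (spTh : spec_in Th a b).

Lemma spec_bform_ge v : a * sqnorm v <= bform Th v v.
Proof. by apply: bform_ge_of_eigenvalues_ge => // l /spTh /andP []. Qed.

Lemma spec_bform_le v : bform Th v v <= b * sqnorm v.
Proof.
rewrite -lerN2 -mulNr -bformN; apply: bform_ge_of_eigenvalues_ge.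
  by rewrite linearN /= sTh.
by move=> l /eigenvalueN /spTh /andP [_]; rewrite lerNl.
Qed.

Let Th_psd v : 0 <= bform Th v v.
Proof. exact: le_trans (mulr_ge0 (ltW a_gt0) (sqnorm_ge0 v)) (spec_bform_ge v). Qed.

Lemma spec_gain_ge : gain_ge Th (a ^+ 2).
Proof.
move=> v; have [->|/sqnorm_gt0 v_gt0] := eqVneq v 0.
  by rewrite sqnorm0 mulr0 sqnorm_ge0.
rewrite -(ler_pM2l v_gt0); apply: le_trans (bform1_CS v (v *m Th)).
rewrite -bform_dotE // mulrCA -expr2 -exprMn ler_sqr ?nnegrE ?spec_bform_ge //.
by rewrite mulr_ge0 ?sqnorm_ge0 ?ltW.
Qed.

Lemma spec_gain_le : gain_le Th (b ^+ 2).
Proof.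
move=> v; have [->|/sqnorm_gt0 q_gt0] := eqVneq (v *m Th) 0.
  by rewrite sqnorm0 mulr_ge0 ?sqnorm_ge0 ?sqr_ge0.
(* Cauchy-Schwarz for the form of Th: |v Th|^4 = <v, v Th>^2 <= <v, v> <v Th, v Th>. *)
rewrite -(ler_pM2l q_gt0) -expr2 {1}sqnorm_mulmx.
apply: le_trans (bform_CS _ _ sTh Th_psd) _.
have -> : sqnorm (v *m Th) * (b ^+ 2 * sqnorm v)
          = (b * sqnorm v) * (b * sqnorm (v *m Th)) by ring.
apply: ler_pM; [exact: Th_psd | exact: Th_psd | exact: spec_bform_le | ].
exact: spec_bform_le.
Qed.

Lemma spec_unitmx : Th \in unitmx.
Proof.
apply: contraT; rewrite unitmxE unitfE negbK => /det0P [v v0 vTh].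
have := spec_gain_ge v; rewrite vTh sqnorm0 pmulr_rle0 ?exprn_gt0 //.
by rewrite leNgt sqnorm_gt0.
Qed.

Lemma spec_gain_invmx_le : gain_le (invmx Th) (a ^- 2).
Proof.
move=> u; have := spec_gain_ge (u *m invmx Th); rewrite mulmxKV ?spec_unitmx //.
by rewrite ler_pdivlMl ?exprn_gt0.
Qed.

Lemma spec_gain_invmx_ge : gain_ge (invmx Th) (b ^- 2).
Proof.
have b_gt0 : 0 < b by exact: lt_le_trans a_le_b.
move=> u; have := spec_gain_le (u *m invmx Th); rewrite mulmxKV ?spec_unitmx //.
by rewrite ler_pdivrMl ?exprn_gt0.
Qed.
End SpectrumBounds.

Section InverseIdentities.
Variables (R : comUnitRingType) (n : nat) (A B : 'M[R]_n).
Hypotheses (A_unit : A \in unitmx) (B_unit : B \in unitmx).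

Lemma invmxB : invmx A - invmx B = - (invmx A *m (A - B) *m invmx B).
Proof.
by rewrite mulmxBr mulmxBl mulVmx // mul1mx -mulmxA mulmxV // mulmx1 opprB.
Qed.

Lemma invmxB_taylor : invmx A - invmx B + invmx B *m (A - B) *m invmx B
  = invmx A *m (A - B) *m invmx B *m (A - B) *m invmx B.
Proof. by rewrite invmxB addrC -!mulmxBl -opprB invmxB opprK. Qed.

Lemma invmx_sandwichB (X : 'M[R]_n) :
  invmx B *m X *m invmx B - invmx A *m X *m invmx A
  = invmx A *m (A - B) *m invmx B *m X *m invmx B
    + invmx A *m X *m invmx A *m (A - B) *m invmx B.
Proof.
have E : invmx B - invmx A = invmx A *m (A - B) *m invmx B.
  by rewrite -opprB invmxB opprK.
transitivity ((invmx B - invmx A) *m X *m invmx B + invmx A *m X *m (invmx B - invmx A)).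
  by rewrite !mulmxBl mulmxBr addrA subrK.
by rewrite E !mulmxA.
Qed.
End InverseIdentities.

Section Symmetry.
Variables (R : realType) (n : nat).
Implicit Types (A B X : 'M[R]_n).

Lemma symmxB A B : symmx A -> symmx B -> symmx (A - B).
Proof. by move=> sA sB; rewrite /symmx linearB /= sA sB. Qed.

Lemma symmx_invmx A : symmx A -> symmx (invmx A).
Proof. by move=> sA; rewrite /symmx trmx_inv sA. Qed.

Lemma symmx_Dinv A X : symmx A -> symmx X -> symmx (Dinv A X).
Proof.
move=> sA sX; rewrite /symmx /Dinv linearN /= !trmx_mul.
by rewrite (symmx_invmx sA) sX mulmxA.
Qed.
End Symmetry.

Section Frobenius.
Variables (R : realType) (n : nat).
Implicit Types (X : 'M[R]_n) (c : R).

Lemma fro_sqr X : fro X ^+ 2 = fro2 X.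
Proof. exact: sqr_sqrtr (fro2_ge0 X). Qed.

Lemma fro_ge0 X : 0 <= fro X.
Proof. exact: sqrtr_ge0. Qed.

Lemma fro_le X c : 0 <= c -> (fro X <= c) = (fro2 X <= c ^+ 2).
Proof. by move=> c_ge0; rewrite -fro_sqr ler_sqr ?nnegrE ?fro_ge0. Qed.

Lemma fro_ge X c : 0 <= c -> (c <= fro X) = (c ^+ 2 <= fro2 X).
Proof. by move=> c_ge0; rewrite -fro_sqr ler_sqr ?nnegrE ?fro_ge0. Qed.
End Frobenius.

Section InverseLipschitz.
Variables (R : realType) (n : nat) (Th1 Th2 : 'M[R]_n) (a b : R).
Hypotheses (s1 : symmx Th1) (s2 : symmx Th2) (a_gt0 : 0 < a) (a_le_b : a <= b)
  (sp1 : spec_in Th1 a b) (sp2 : spec_in Th2 a b).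

Let u1 := spec_unitmx s1 a_gt0 sp1.
Let u2 := spec_unitmx s2 a_gt0 sp2.
Let up1 := spec_gain_invmx_le s1 a_gt0 sp1.
Let up2 := spec_gain_invmx_le s2 a_gt0 sp2.
Let ca_ge0 : 0 <= a ^- 2. Proof. by rewrite invr_ge0 exprn_ge0 ?ltW. Qed.
Let a3_ge0 : 0 <= a ^- 3. Proof. by rewrite invr_ge0 exprn_ge0 ?ltW. Qed.

Lemma fro_invmxB_le : fro (invmx Th1 - invmx Th2) <= a ^- 2 * fro (Th1 - Th2).
Proof.
rewrite fro_le ?mulr_ge0 ?fro_ge0 // exprMn fro_sqr expr2 invmxB // fro2N.
exact: fro2_sandwich_le (symmx_invmx s1) ca_ge0 up1 up2.
Qed.

Lemma fro_invmxB_ge : b ^- 2 * fro (Th1 - Th2) <= fro (invmx Th1 - invmx Th2).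
Proof.
have cb_ge0 : 0 <= b ^- 2 by rewrite invr_ge0 exprn_ge0 // (le_trans (ltW a_gt0)).
rewrite fro_ge ?mulr_ge0 ?fro_ge0 // exprMn fro_sqr expr2 invmxB // fro2N.
exact: fro2_sandwich_ge (symmx_invmx s1) cb_ge0
  (spec_gain_invmx_ge s1 a_gt0 a_le_b sp1) (spec_gain_invmx_ge s2 a_gt0 a_le_b sp2).
Qed.

Lemma fro_invmx_taylor_le :
  fro (invmx Th1 - invmx Th2 - Dinv Th2 (Th1 - Th2)) <= a ^- 3 * fro (Th1 - Th2) ^+ 2.
Proof.
rewrite fro_le ?mulr_ge0 ?exprn_ge0 ?fro_ge0 // /Dinv opprK invmxB_taylor //.
have -> : (a ^- 3 * fro (Th1 - Th2) ^+ 2) ^+ 2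
          = (a ^- 2) ^+ 3 * (fro2 (Th1 - Th2) * fro2 (Th1 - Th2)).
  by rewrite fro_sqr; field; rewrite gt_eqF.
exact: fro2_sandwich2_le (symmx_invmx s1) ca_ge0 up1 up2 up2.
Qed.

Lemma fro_DinvB_le X :
  fro (Dinv Th1 X - Dinv Th2 X) <= 2 * a ^- 3 * fro (Th1 - Th2) * fro X.
Proof.
rewrite fro_le ?mulr_ge0 ?fro_ge0 // /Dinv opprK addrC invmx_sandwichB //.
apply: le_trans (fro2D_le _ _) _.
have -> : (2 * a ^- 3 * fro (Th1 - Th2) * fro X) ^+ 2
          = 2 * ((a ^- 2) ^+ 3 * (fro2 (Th1 - Th2) * fro2 X)
               + (a ^- 2) ^+ 3 * (fro2 X * fro2 (Th1 - Th2))).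
  by rewrite !exprMn !fro_sqr; field; rewrite gt_eqF.
apply: ler_wpM2l => //; apply: lerD.
  exact: fro2_sandwich2_le (symmx_invmx s1) ca_ge0 up1 up2 up2.
exact: fro2_sandwich2_le (symmx_invmx s1) ca_ge0 up1 up2 up1.
Qed.
End InverseLipschitz.

Theorem lemma1 (R : realType) (dT : measure_display) (T : measurableType dT)
  (P : probability T R) (d k : nat) (Y : 'I_d -> {RV P >-> R})
  (cF CF a b : R) :
  (isLambdaG Y \/ isLambdaU Y) ->
  0 < cF -> 0 < CF ->
  (forall M : 'M[R]_d, symmx M ->
     ((cF * fro M)%:E <= normL Y M)%E /\ (normL Y M <= (CF * fro M)%:E)%E) ->
  0 < a -> a <= b ->
  let alpha := cF / b ^+ 2 in
  let beta := CF / a ^+ 2 in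
  let L := CF / a ^+ 3 in
  let zeta := 2 * L in
  forall Th1 Th2 : 'M[R]_d, frakS k a b Th1 -> frakS k a b Th2 ->
    [/\ ((alpha * fro (Th1 - Th2))%:E <= normL Y (invmx Th1 - invmx Th2)%R)%E,
        (normL Y (invmx Th1 - invmx Th2)%R <= (beta * fro (Th1 - Th2))%:E)%E,
        (normL Y (invmx Th1 - invmx Th2 - Dinv Th2 (Th1 - Th2))%R
           <= (L * fro (Th1 - Th2) ^+ 2)%:E)%E &
        (opnormL Y (fun H => (Dinv Th1 H - Dinv Th2 H)%R)
           <= (zeta * fro (Th1 - Th2))%:E)%E].
Proof.
move=> _ cF_gt0 CF_gt0 norm_equiv a_gt0 a_le_b alpha beta L zeta Th1 Th2
  [[s1 _] [_ sp1]] [[s2 _] [_ sp2]].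
have normL_ge M c : symmx M -> c <= fro M -> ((cF * c)%:E <= normL Y M)%E.
  move=> sM cM; apply: le_trans (norm_equiv M sM).1.
  by rewrite lee_fin; apply: ler_wpM2l => //; exact: ltW.
have normL_le M c : symmx M -> fro M <= c -> (normL Y M <= (CF * c)%:E)%E.
  move=> sM Mc; apply: le_trans (norm_equiv M sM).2 _.
  by rewrite lee_fin; apply: ler_wpM2l => //; exact: ltW.
have sI : symmx (invmx Th1 - invmx Th2) := symmxB (symmx_invmx s1) (symmx_invmx s2).
split.
- rewrite /alpha -mulrA; apply: normL_ge sI _.
  exact: fro_invmxB_ge s1 s2 a_gt0 a_le_b sp1 sp2.
- rewrite /beta -mulrA; apply: normL_le sI _.
  exact: fro_invmxB_le s1 s2 a_gt0 sp1 sp2.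
- rewrite /L -mulrA; apply: normL_le (symmxB sI (symmx_Dinv s2 (symmxB s1 s2))) _.
  exact: fro_invmx_taylor_le s1 s2 a_gt0 sp1 sp2.
- apply: ge_ereal_sup => _ [X [sX X_le1] <-].
  have -> : zeta * fro (Th1 - Th2) = CF * (2 * a ^- 3 * fro (Th1 - Th2) * 1).
    by rewrite /zeta /L; ring.
  apply: normL_le (symmxB (symmx_Dinv s1 sX) (symmx_Dinv s2 sX)) _.
  apply: le_trans (fro_DinvB_le s1 s2 a_gt0 sp1 sp2 X) _.
  by apply: ler_wpM2l => //; rewrite !mulr_ge0 ?invr_ge0 ?exprn_ge0 ?fro_ge0 ?ltW.
Qed.
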